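(* Let $R=\bigoplus_{s\in S}R_s$ be an $S$-graded ring inducing $S$ with $S$ cancellative. If $R$ is graded von Neumann regular, then $R$ is nearly epsilon-strongly graded.
   Context: Rings are associative, not necessarily unital. $S$-graded ring inducing $S$: $S$ a partial groupoid, $R=\bigoplus_{s\in S}R_s$, $R_sR_t\subseteq R_{st}$ when $st$ is defined, and $R_sR_t\neq0$ implies $st$ defined. Convention: $0\in S$, $R_0=0$, $S\setminus\{0\}=\{s:R_s\ne0\}$, undefined products set to $0$, $0$ absorbing. $H_R=\bigcup_sR_s$. $S$ is cancellative if $0\ne su=tu$ or $0\ne us=ut$ implies $s=t$. $I(S)$ is the set of idempotents of $S$. $S$ satisfies (LRI) if for every $s\in S$ there exist $s^{-1}\in S$ and $e,f\in I(S)$ with $es=sf=s$, $fs^{-1}=s^{-1}e=s^{-1}$, $ss^{-1}=e$, $s^{-1}s=f$ (these are unique when $S$ is cancellative). For $s,t$, $R_sR_t$ denotes the additive subgroup generated by products $ab$, $a\in R_s$, $b\in R_t$. $R$ (with $S$ cancellative) is nearly epsilon-strongly graded if $S$ satisfies (LRI) and for every $s\in S$ and $x\in R_s$ there exist $\epsilon(x)\in R_sR_{s^{-1}}$ and $\epsilon'(x)\in R_{s^{-1}}R_s$ with $\epsilon(x)x=x=x\epsilon'(x)$. $R$ is graded von Neumann regular if $x\in xRx$ for all $x\in H_R$. *)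

(* Non-unital associative rings: additive group (zmodType)
   with an explicit associative, biadditive multiplication. *)
From mathcomp Require Import all_boot all_algebra.
From Stdlib Require Import List.
Set Implicit Arguments. Unset Strict Implicit. Unset Printing Implicit Defensive.
Import GRing.Theory.
Local Open Scope ring_scope.

Definition is_rng (R : zmodType) (mul : R -> R -> R) : Prop :=
  [/\ forall x y z, mul x (mul y z) = mul (mul x y) z,
      forall x y z, mul (x + y) z = mul x z + mul y z &
      forall x y z, mul x (y + z) = mul x y + mul x z].

(* Partial groupoid S with the convention: an element z (playing 0) that is
   absorbing; undefined products are set to z. *)
Definition absorbing (S : Type) (op : S -> S -> S) (z : S) : Prop :=
  forall s, op z s = z /\ op s z = z.

Definition graded_inducing (R : zmodType) (mul : R -> R -> R)
  (S : Type) (op : S -> S -> S) (z : S) (Rg : S -> R -> Prop) : Prop :=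
      (forall s, Rg s 0 /\ (forall x y, Rg s x -> Rg s y -> Rg s (x - y))) /\
      (forall x, Rg z x -> x = 0) /\
      (forall x : R, exists (l : list S) (c : S -> R),
        NoDup l /\ (forall s, Rg s (c s)) /\ x = \sum_(s <- l) c s) /\
      (forall (l : list S) (c : S -> R), NoDup l ->
        (forall s, In s l -> Rg s (c s)) -> \sum_(s <- l) c s = 0 ->
        forall s, In s l -> c s = 0) /\
  (* R_s R_t included in R_{st}; with st := 0 when undefined and R_0 = 0, this
     also encodes "R_s R_t <> 0 implies st defined" *)
      (forall s t a b, Rg s a -> Rg t b -> Rg (op s t) (mul a b)) /\
      (forall s, s <> z <-> exists a, Rg s a /\ a <> 0).

Definition cancellative (S : Type) (op : S -> S -> S) (z : S) : Prop :=
  (forall s t u, op s u <> z -> op s u = op t u -> s = t) /\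
  (forall s t u, op u s <> z -> op u s = op u t -> s = t).

Definition idempotent (S : Type) (op : S -> S -> S) (e : S) : Prop := op e e = e.

Definition lri_inverse (S : Type) (op : S -> S -> S) (s s' : S) : Prop :=
  exists e f, [/\ idempotent op e, idempotent op f,
    op e s = s /\ op s f = s, op f s' = s' /\ op s' e = s' &
    op s s' = e /\ op s' s = f].

Definition LRI (S : Type) (op : S -> S -> S) : Prop :=
  forall s, exists s', lri_inverse op s s'.

(* x in R_s R_t : the additive subgroup generated by products ab, a in R_s, b in R_t
   (finite sums of such products, R_s being closed under negation) *)
Definition in_prod (R : zmodType) (mul : R -> R -> R) (Rg_s Rg_t : R -> Prop)
  (x : R) : Prop :=
  exists l : list (R * R), (forall p, In p l -> Rg_s p.1 /\ Rg_t p.2) /\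
    x = \sum_(p <- l) mul p.1 p.2.

Definition nearly_epsilon_strongly_graded (R : zmodType) (mul : R -> R -> R)
  (S : Type) (op : S -> S -> S) (Rg : S -> R -> Prop) : Prop :=
  LRI op /\
  forall s s', lri_inverse op s s' -> forall x, Rg s x ->
    exists eps eps', in_prod mul (Rg s) (Rg s') eps /\
      in_prod mul (Rg s') (Rg s) eps' /\ mul eps x = x /\ mul x eps' = x.

Definition graded_vN_regular (R : zmodType) (mul : R -> R -> R)
  (S : Type) (Rg : S -> R -> Prop) : Prop :=
  forall s x, Rg s x -> exists r, x = mul (mul x r) x.

From Stdlib Require Import List.
From mathcomp Require Import all_boot all_algebra boolp.
Set Implicit Arguments. Unset Strict Implicit. Unset Printing Implicit Defensive.
Import GRing.Theory.
Local Open Scope ring_scope.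

(* Write a homogeneous x of degree s as x = x r x and split r into homogeneous
   components r_t.  Since x r_t x has degree (st)s, comparing degrees gives
   x = sum of the x r_t x with (st)s = s, and by cancellativity only one such t
   has st <> 0; hence x = x r_t x with r_t homogeneous.  Then y = r_t x r_t
   satisfies x y x = x and y x y = y, and reading off the degrees of the nonzero
   elements xy, yx, y shows that deg y is an (LRI)-inverse of s.  When an inverse
   s^-1 is given, t = s^-1 qualifies, and eps(x) = x r_t, eps'(x) = r_t x. *)

Lemma In_mem (T : eqType) (x : T) (l : seq T) : In x l <-> x \in l.
Proof.
elim: l => [|y l IHl] //=; rewrite in_cons; split.
- by case=> [->|/IHl ->]; rewrite ?eqxx ?orbT.
- by case/orP=> [/eqP->|/IHl]; [left|right].
Qed.

Lemma uniq_NoDup (T : eqType) (l : seq T) : uniq l -> NoDup l.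
Proof.
elim: l => [|y l IHl] /=; first by constructor.
by case/andP=> yl ul; constructor; [move/In_mem; apply/negP | exact: IHl].
Qed.

Lemma cancel_sandwich (S : Type) (op : S -> S -> S) (z : S) s t t' :
  cancellative op z -> s <> z -> op s t <> z ->
  op (op s t) s = s -> op (op s t') s = s -> t = t'.
Proof.
case=> cancelr cancell s0 st sts st's.
by apply: (cancell _ _ s st); apply: (cancelr _ _ s); rewrite ?sts ?st's.
Qed.

Lemma in_prod_mul (R : zmodType) (mul : R -> R -> R) (P Q : R -> Prop) a b :
  P a -> Q b -> in_prod mul P Q (mul a b).
Proof.
by move=> Pa Qb; exists [:: (a, b)]; split=> [p [<- | []] | ]; rewrite ?big_seq1.
Qed.

Section Rng.

Variables (R : zmodType) (mul : R -> R -> R).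
Hypothesis mulR : is_rng mul.

Lemma rng_mulA x y w : mul x (mul y w) = mul (mul x y) w.
Proof. by case: mulR. Qed.

Lemma rng_mul0l x : mul 0 x = 0.
Proof. by case: mulR => _ mulDl _; apply: (addrI (mul 0 x)); rewrite -mulDl !addr0. Qed.

Lemma rng_mul0r x : mul x 0 = 0.
Proof. by case: mulR => _ _ mulDr; apply: (addrI (mul x 0)); rewrite -mulDr !addr0. Qed.

Lemma rng_mul_suml (I : Type) (r : seq I) (P : pred I) (F : I -> R) y :
  mul (\sum_(i <- r | P i) F i) y = \sum_(i <- r | P i) mul (F i) y.
Proof.
apply: (big_morph (mul^~ y)); last exact: rng_mul0l.
by case: mulR => _ mulDl _ a b; rewrite mulDl.
Qed.

Lemma rng_mul_sumr (I : Type) (r : seq I) (P : pred I) (F : I -> R) y :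
  mul y (\sum_(i <- r | P i) F i) = \sum_(i <- r | P i) mul y (F i).
Proof.
apply: (big_morph (mul y)); last exact: rng_mul0r.
by case: mulR => _ _ mulDr a b; rewrite mulDr.
Qed.

Section Graded.

Variables (S : eqType) (op : S -> S -> S) (z : S) (Rg : S -> R -> Prop).
Hypothesis gradedR : graded_inducing mul op z Rg.

Lemma Rg0 s : Rg s 0.
Proof. by case: gradedR => /(_ s)[]. Qed.

Lemma Rg_sub s x y : Rg s x -> Rg s y -> Rg s (x - y).
Proof. by case: gradedR => /(_ s)[_ sub] _; apply: sub. Qed.

Lemma Rg_opp s x : Rg s x -> Rg s (- x).
Proof. by move=> xs; rewrite -sub0r; apply: Rg_sub (Rg0 s) xs. Qed.

Lemma Rg_add s x y : Rg s x -> Rg s y -> Rg s (x + y).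
Proof. by move=> xs ys; rewrite -[y]opprK; apply: Rg_sub xs (Rg_opp ys). Qed.

Lemma Rg_sum s (I : Type) (r : seq I) (P : pred I) (F : I -> R) :
  (forall i, P i -> Rg s (F i)) -> Rg s (\sum_(i <- r | P i) F i).
Proof. by move=> homF; apply: big_ind => //; [exact: Rg0 | exact: Rg_add]. Qed.

Lemma Rg_mul s t a b : Rg s a -> Rg t b -> Rg (op s t) (mul a b).
Proof. by case: gradedR => _ [_ [_ [_ [hommul _]]]]; apply: hommul. Qed.

Lemma Rgz_eq0 x : Rg z x -> x = 0.
Proof. by case: gradedR => _ [Rgz _]; apply: Rgz. Qed.

Lemma Rg_neq0_degree s x : Rg s x -> x != 0 -> s <> z.
Proof. by move=> xs /eqP x0 sz; apply/x0/Rgz_eq0; rewrite -sz. Qed.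

Lemma Rg_nonzero s : s <> z -> exists2 x, Rg s x & x != 0.
Proof.
case: gradedR => _ [_ [_ [_ [_ /(_ s) support]]]].
by case/support=> x [xs /eqP x0]; exists x.
Qed.

Lemma Rg_mul_eq0 s t a b : op s t = z -> Rg s a -> Rg t b -> mul a b = 0.
Proof. by move=> stz sa tb; apply: Rgz_eq0; rewrite -stz; apply: Rg_mul. Qed.

Lemma Rg_decomposition x :
  exists (l : seq S) (c : S -> R), (forall s, Rg s (c s)) /\ x = \sum_(s <- l) c s.
Proof.
case: gradedR => _ [_ [/(_ x) decomp _]].
by have [l [c [_ [homc ->]]]] := decomp; exists l, c.
Qed.

Lemma Rg_sum_direct (l : seq S) (c : S -> R) : uniq l ->
  (forall s, s \in l -> Rg s (c s)) -> \sum_(s <- l) c s = 0 ->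
  forall s, s \in l -> c s = 0.
Proof.
move=> ul homc sum0 s sl; case: gradedR => _ [_ [_ [direct _]]].
apply: (direct l) => //; first exact: uniq_NoDup.
- by move=> t /In_mem/homc.
- exact/In_mem.
Qed.

Lemma homogeneous_sum_eq0 (l : seq (S * R)) :
  (forall p, p \in l -> Rg p.1 p.2) -> \sum_(p <- l) p.2 = 0 ->
  forall u, \sum_(p <- l | p.1 == u) p.2 = 0.
Proof.
move=> homl suml0 u.
pose c v := \sum_(p <- l | p.1 == v) p.2.
have Rg_c v : Rg v (c v).
  by rewrite /c big_seq_cond; apply: Rg_sum => p /andP[/homl + /eqP <-].
pose degs := undup (map fst l).
have sum_c : \sum_(v <- degs) c v = 0.
  rewrite /c (exchange_big_dep xpredT) //= -[RHS]suml0; apply: eq_big_seq => p pl.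
  rewrite (eq_bigl (pred1 p.1)) => [|v]; last by rewrite /= eq_sym.
  by rewrite big_const_seq count_uniq_mem ?undup_uniq // mem_undup map_f //= addr0.
have [u_deg | u_deg] := boolP (u \in degs).
  exact: Rg_sum_direct (undup_uniq _) (fun v _ => Rg_c v) sum_c _ u_deg.
rewrite big_seq_cond big1 // => p /andP[pl /eqP pu].
by move: u_deg; rewrite -pu mem_undup map_f.
Qed.

Lemma Rg_degree_unique s t x : x != 0 -> Rg s x -> Rg t x -> s = t.
Proof.
move=> x0 xs xt; apply/eqP; apply: contraNT x0 => st.
pose l := [:: (s, x); (t, - x)].
have homl p : p \in l -> Rg p.1 p.2.
  by rewrite !inE => /predU1P[-> | /eqP->] //; exact: Rg_opp.
have suml0 : \sum_(p <- l) p.2 = 0 by rewrite !big_cons big_nil addr0 subrr.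
move: (homogeneous_sum_eq0 homl suml0 s).
by rewrite !big_cons big_nil /= eqxx eq_sym (negbTE st) !addr0 => ->.
Qed.

Lemma Rg_mul_degree s t u a b c : Rg s a -> Rg t b -> Rg u c -> c != 0 ->
  mul a b = c -> op s t = u.
Proof.
move=> sa tb uc c0 abc; rewrite -abc in c0 uc.
exact: Rg_degree_unique c0 (Rg_mul sa tb) uc.
Qed.

Lemma regular_degree_sum s x (l : seq S) (c : S -> R) :
  Rg s x -> (forall t, Rg t (c t)) -> mul (mul x (\sum_(t <- l) c t)) x = x ->
  x = \sum_(t <- l | op (op s t) s == s) mul (mul x (c t)) x.
Proof.
move=> xs homc xrx.
have xE : x = \sum_(t <- l) mul (mul x (c t)) x.
  by rewrite -{1}xrx rng_mul_sumr rng_mul_suml.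
pose terms := (s, x) :: [seq (op (op s t) s, - mul (mul x (c t)) x) | t <- l].
have hom_terms p : p \in terms -> Rg p.1 p.2.
  rewrite inE => /predU1P[-> // | /mapP[t _ ->]] /=.
  exact/Rg_opp/(Rg_mul _ xs)/(Rg_mul xs).
have sum0 : \sum_(p <- terms) p.2 = 0 by rewrite big_cons big_map sumrN -xE subrr.
move: (homogeneous_sum_eq0 hom_terms sum0 s).
by rewrite big_cons eqxx big_map sumrN => /subr0_eq.
Qed.

Lemma reflexive_inverse s t x y : Rg s x -> Rg t y -> mul (mul x y) x = x ->
  exists2 y', Rg (op (op t s) t) y' & mul (mul x y') x = x /\ mul (mul y' x) y' = y'.
Proof.
move=> xs yt xyx; exists (mul (mul y x) y); first exact/(Rg_mul _ yt)/(Rg_mul yt).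
have yx_idem : mul (mul y x) (mul y x) = mul y x by rewrite -rng_mulA (rng_mulA x) xyx.
split; first by rewrite !rng_mulA xyx xyx.
by rewrite -(rng_mulA (mul y x)) yx_idem rng_mulA yx_idem.
Qed.

Lemma lri_inverse_of_reflexive s t x y : Rg s x -> Rg t y -> x != 0 ->
  mul (mul x y) x = x -> mul (mul y x) y = y -> lri_inverse op s t.
Proof.
move=> xs yt x0 xyx yxy.
have xy0 : mul x y != 0 by apply: contraNneq x0 => xy0; rewrite -xyx xy0 rng_mul0l.
have yx0 : mul y x != 0.
  by apply: contraNneq x0 => yx0; rewrite -xyx -rng_mulA yx0 rng_mul0r.
have y0 : y != 0 by apply: contraNneq x0 => y0; rewrite -xyx y0 rng_mul0r rng_mul0l.
have xys := Rg_mul xs yt; have yxt := Rg_mul yt xs.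
exists (op s t), (op t s); split=> //.
- by apply: (Rg_mul_degree xys xys xys xy0); rewrite rng_mulA xyx.
- by apply: (Rg_mul_degree yxt yxt yxt yx0); rewrite rng_mulA yxy.
- split; first exact: (Rg_mul_degree xys xs xs x0 xyx).
  by apply: (Rg_mul_degree xs yxt xs x0); rewrite rng_mulA.
- split; first exact: (Rg_mul_degree yxt yt yt y0 yxy).
  by apply: (Rg_mul_degree yt xys yt y0); rewrite rng_mulA.
Qed.

Section Regular.

Hypotheses (zabs : absorbing op z) (cancelS : cancellative op z).
Hypothesis regularR : graded_vN_regular mul Rg.

Lemma regular_component s t x (l : seq S) (c : S -> R) :
  Rg s x -> x != 0 -> (forall t', Rg t' (c t')) ->
  mul (mul x (\sum_(t' <- l) c t')) x = x ->
  op (op s t) s = s -> op s t <> z ->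
  mul (mul x (\sum_(t' <- l | t' == t) c t')) x = x.
Proof.
move=> xs x0 homc xrx sts st; have s0 := Rg_neq0_degree xs x0.
rewrite rng_mul_sumr rng_mul_suml [RHS](regular_degree_sum xs homc xrx).
rewrite [LHS]big_mkcond [RHS]big_mkcond; apply: eq_bigr => t' _.
have [-> | t't] := eqVneq t' t; first by rewrite sts eqxx.
case: eqP => // st's; have [st'z | /eqP st'] := eqVneq (op s t') z.
  by rewrite (Rg_mul_eq0 st'z xs (homc t')) rng_mul0l.
by case/eqP: t't; apply: cancel_sandwich cancelS s0 st' st's sts.
Qed.

Lemma regular_homogeneous_inverse s t x : Rg s x -> x != 0 ->
  op (op s t) s = s -> op s t <> z -> exists2 y, Rg t y & mul (mul x y) x = x.
Proof.
move=> xs x0 sts st; have [r xrx] := regularR xs.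
have [l [c [homc rE]]] := Rg_decomposition r.
exists (\sum_(t' <- l | t' == t) c t'); first by apply: Rg_sum => t' /eqP <-.
by apply: regular_component sts st => //; rewrite -rE -xrx.
Qed.

Lemma regular_degree_exists s x : Rg s x -> x != 0 ->
  exists t, op (op s t) s = s /\ op s t <> z.
Proof.
move=> xs x0; have [r xrx] := regularR xs.
have [l [c [homc rE]]] := Rg_decomposition r.
move: xrx; rewrite rE => /esym/(regular_degree_sum xs homc) xE.
have [/hasP[t _ /andP[/eqP sts /eqP st]] | /hasPn none] :=
  boolP (has (fun t => (op (op s t) s == s) && (op s t != z)) l); first by exists t.
move/eqP: x0; rewrite xE big_seq_cond big1 // => t /andP[tl sts].
move: (none t tl); rewrite sts negbK => /eqP stz.
by rewrite (Rg_mul_eq0 stz xs (homc t)) rng_mul0l.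
Qed.

Lemma graded_regular_LRI : LRI op.
Proof.
move=> s; have [-> | /eqP s0] := eqVneq s z.
  by exists z, z, z; rewrite /idempotent (zabs z).1.
have [x xs x0] := Rg_nonzero s0.
have [t [sts st]] := regular_degree_exists xs x0.
have [y yt xyx] := regular_homogeneous_inverse xs x0 sts st.
have [y' y't [xy'x y'xy']] := reflexive_inverse xs yt xyx.
by exists (op (op t s) t); apply: lri_inverse_of_reflexive xs y't x0 xy'x y'xy'.
Qed.

Lemma graded_regular_epsilon s s' : lri_inverse op s s' -> forall x, Rg s x ->
  exists eps eps', in_prod mul (Rg s) (Rg s') eps /\
    in_prod mul (Rg s') (Rg s) eps' /\ mul eps x = x /\ mul x eps' = x.
Proof.
move=> [e [f [_ _ [es _] _ [ss' _]]]] x xs.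
have [y ys' xyx] : exists2 y, Rg s' y & mul (mul x y) x = x.
  have [-> | x0] := eqVneq x 0; first by exists 0; [exact: Rg0 | rewrite !rng_mul0l].
  have s0 := Rg_neq0_degree xs x0.
  apply: (regular_homogeneous_inverse xs x0); rewrite ss'; first exact: es.
  by move=> ez; apply: s0; rewrite -es ez (zabs s).1.
exists (mul x y), (mul y x).
split; first exact: in_prod_mul.
split; first exact: in_prod_mul.
by split; last rewrite rng_mulA.
Qed.

End Regular.

End Graded.

End Rng.

Theorem proposition4p7 (R : zmodType) (mul : R -> R -> R)
  (S : Type) (op : S -> S -> S) (z : S) (Rg : S -> R -> Prop) :
  is_rng mul -> absorbing op z -> graded_inducing mul op z Rg ->
  cancellative op z -> graded_vN_regular mul Rg ->
  nearly_epsilon_strongly_graded mul op Rg.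
Proof.
move=> mulR zabs gradedR cancelS regularR; split.
  exact: (@graded_regular_LRI _ _ mulR {classic S} _ _ _ gradedR).
exact: (@graded_regular_epsilon _ _ mulR {classic S} _ _ _ gradedR).
Qed.
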